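(* Let $k\geq2$ and let $L=(l_1,\dots,l_k)$ be positive integers with sum $n$ which are generic and reduced, and let $(f_0,\dots,f_{k-1})$ be the $f$-vector of $Tonn^{n,k}(L)$ ($f_{m-1}$ = number of $(m-1)$-dimensional simplices). Then for $1\leq m\leq k$, $$f_{m-1}=n\,\frac{P(k,m)}{m}=n\,\frac{m!}{m}\,S(k,m),$$ where $P(k,m)$ is the number of ordered partitions $I_1\sqcup\dots\sqcup I_m=[k]$ into $m$ nonempty blocks and $S(k,m)$ is the Stirling number of the second kind.
   Context: $L=(l_1,\dots,l_k)$ is generic if for all subsets $I,J\subseteq[k]$, $\sum_{i\in I}l_i=\sum_{j\in J}l_j$ implies $I=J$. $L$ is reduced if $\gcd(l_1,\dots,l_k)=1$. The generalized tonnetz $Tonn^{n,k}(L)$ is the simplicial complex on vertex set $\mathbb{Z}_n$ whose maximal simplices are the sets $\Delta(x;\sigma)=\{x,\,x+l_{\sigma(1)},\dots,x+l_{\sigma(1)}+\dots+l_{\sigma(k-1)}\}$ (sums in $\mathbb{Z}_n$), for $x\in\mathbb{Z}_n$ and $\sigma\in S_k$; its simplices are all subsets of these sets. *)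

From mathcomp Require Import all_boot all_fingroup.
Set Implicit Arguments. Unset Strict Implicit. Unset Printing Implicit Defensive.

(* L = (l_0,...,l_{k-1}) indexed by 'I_k. *)
Definition generic (k : nat) (l : 'I_k -> nat) : Prop :=
  forall I J : {set 'I_k},
    \sum_(i in I) l i = \sum_(j in J) l j -> I = J.

Definition reduced (k : nat) (l : 'I_k -> nat) : Prop :=
  \big[gcdn/0]_(i < k) l i = 1.

(* Vertex set Z_n represented by 'I_n; sums taken mod n.
   Delta(x; s) = { x + l_{s 0} + ... + l_{s (i-1)} mod n : 0 <= i < k }. *)
Definition tonn_delta (n k : nat) (l : 'I_k -> nat) (x : 'I_n) (s : {perm 'I_k})
  : {set 'I_n} :=
  [set y : 'I_n | [exists i : 'I_k,
     val y == (x + \sum_(j < k | j < i) l (s j)) %% n]].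

Definition tonn_simplex (n k : nat) (l : 'I_k -> nat) (A : {set 'I_n}) : bool :=
  [exists x : 'I_n, exists s : {perm 'I_k}, A \subset tonn_delta l x s].

(* f-vector entry f_{m-1}: number of simplices with m vertices. *)
Definition tonn_f (n k : nat) (l : 'I_k -> nat) (m : nat) : nat :=
  #|[set A : {set 'I_n} | (#|A| == m) && tonn_simplex l A]|.

(* Number of ordered partitions of [k] into m nonempty blocks
   (I_1,...,I_m), encoded as surjections 'I_k -> 'I_m (block index). *)
Definition ord_partitions (k m : nat) : nat :=
  #|[set f : {ffun 'I_k -> 'I_m} | [forall j : 'I_m, exists i : 'I_k, f i == j]]|.

Fixpoint stirling2 (k m : nat) : nat :=
  match k, m with
  | 0, 0 => 1
  | 0, _.+1 => 0
  | _.+1, 0 => 0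
  | k'.+1, m'.+1 => m'.+1 * stirling2 k' m'.+1 + stirling2 k' m'
  end.

(* Count the pairs (A, a) of an m-vertex simplex A and a vertex a of A.  A lies in
   some Delta(x; s), and rotating s re-bases Delta at any of its vertices, so A lies
   in some Delta(a; t).  Grouping the steps of t between consecutive vertices of A
   gives an ordered partition (I_1, ..., I_m) of [k] with
   A = {a + sum of l over I_1 u ... u I_J : J < m}; conversely every such set is a
   simplex (order [k] block by block), and genericity recovers the partition from
   (A, a).  Hence m f_{m-1} = n P(k, m), and P(k, m) = m! S(k, m) by splitting off
   the block of the first element. *)

From mathcomp Require Import all_boot all_fingroup zify.
Set Implicit Arguments. Unset Strict Implicit. Unset Printing Implicit Defensive.

Lemma card_set_pair (I J : finType) (Q : I -> J -> bool) :
  #|[set p : I * J | Q p.1 p.2]| = \sum_i #|[set j | Q i j]|.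
Proof.
rewrite -sum1dep_card (eq_bigr (fun i => \sum_(j | Q i j) 1)) => [|i _]; last first.
  by rewrite sum1dep_card.
by rewrite pair_big_dep.
Qed.

Definition surjectiveb (I J : finType) (f : {ffun I -> J}) :=
  [forall j, exists i, f i == j].

Lemma surjectiveb_card_image (I T : finType) (f : {ffun I -> T}) (K : {set I}) :
  #|f @: K| = #|T| -> surjectiveb f.
Proof.
move=> card_im; apply/forallP => y.
have /imsetP[x _ ->] : y \in f @: K.
  rewrite (_ : f @: K = setT) //.
  by apply/eqP; rewrite eqEcard subsetT cardsT card_im leqnn.
by apply/existsP; exists x.
Qed.

Local Notation surjections k m := [set f : {ffun 'I_k -> 'I_m} | surjectiveb f].

Section FfunCons.
Variables (T : finType) (k : nat).

Definition ffun_cons (v : T) (g : {ffun 'I_k -> T}) : {ffun 'I_k.+1 -> T} :=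
  [ffun i => if unlift ord0 i is Some j then g j else v].

Lemma ffun_cons_inj : injective (fun p : T * {ffun 'I_k -> T} => ffun_cons p.1 p.2).
Proof.
move=> [v g] [v' g'] /ffunP /= eq_cons; have := eq_cons ord0.
rewrite !ffunE unlift_none => <-; congr pair; apply/ffunP => j.
by have := eq_cons (lift ord0 j); rewrite !ffunE liftK.
Qed.

Lemma ffun_consE (f : {ffun 'I_k.+1 -> T}) :
  f = ffun_cons (f ord0) [ffun j => f (lift ord0 j)].
Proof. by apply/ffunP => i; rewrite !ffunE; case: unliftP => [j|] ->; rewrite ?ffunE. Qed.

Lemma card_ffun_cons (P : pred {ffun 'I_k.+1 -> T}) :
  #|[set f | P f]| = \sum_v #|[set g | P (ffun_cons v g)]|.
Proof.
rewrite -card_set_pair -(card_imset _ ffun_cons_inj); apply: eq_card => f.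
rewrite inE; apply/idP/imsetP => [Pf | [[v g] + ->]]; last by rewrite inE.
by exists (f ord0, [ffun j => f (lift ord0 j)]); rewrite ?inE /= -?ffun_consE.
Qed.

End FfunCons.

Section SurjectionCount.
Variables (k m : nat).

Definition lift_ffun (v : 'I_m.+1) (g : {ffun 'I_k -> 'I_m}) : {ffun 'I_k -> 'I_m.+1} :=
  [ffun i => lift v (g i)].

Lemma lift_ffun_inj v : injective (lift_ffun v).
Proof.
move=> g g' /ffunP eq_lift; apply/ffunP => i.
by have := eq_lift i; rewrite !ffunE; apply: lift_inj.
Qed.

Lemma surjectiveb_cons v (g : {ffun 'I_k -> 'I_m.+1}) :
  surjectiveb (ffun_cons v g) = [forall j, (j == v) || [exists i, g i == j]].
Proof.
apply: eq_forallb => j; apply/existsP/orP => [[i]|[/eqP->|/existsP[i gi]]].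
- rewrite ffunE; case: unliftP => [i' _ gi' | _ /eqP->]; last by left.
  by right; apply/existsP; exists i'.
- by exists ord0; rewrite ffunE unlift_none.
- by exists (lift ord0 i); rewrite ffunE liftK.
Qed.

Lemma mem_lift_ffun v (g : {ffun 'I_k -> 'I_m.+1}) :
  (g \in [set lift_ffun v g' | g' in surjections k m]) =
  [forall i, g i != v] && [forall j, (j != v) ==> [exists i, g i == j]].
Proof.
apply/imsetP/andP => [[g' /[!inE] /forallP g'_surj ->] | [/forallP g_v /forallP g_hit]].
  split; first by apply/forallP => i; rewrite ffunE eq_sym neq_lift.
  apply/forallP => j; apply/implyP; case: (unliftP v j) => [j' -> _ | -> /[!eqxx] //].
  by have /existsP[i /eqP <-] := g'_surj j'; apply/existsP; exists i; rewrite ffunE.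
have g_lift i : {j | g i = lift v j}.
  by case: (unliftP v (g i)) (g_v i) => [j -> _ | -> /[!eqxx] //]; exists j.
exists [ffun i => sval (g_lift i)]; last first.
  by apply/ffunP => i; rewrite !ffunE; case: (g_lift i).
rewrite inE; apply/forallP => j.
have /existsP[i /eqP gi] : [exists i, g i == lift v j].
  by rewrite (implyP (g_hit _)) // eq_sym neq_lift.
apply/existsP; exists i; rewrite ffunE; case: (g_lift i) => j' /=.
by rewrite gi => /lift_inj ->.
Qed.

Lemma surjections_cons v :
  [set g | surjectiveb (ffun_cons v g)] =
  surjections k m.+1 :|: [set lift_ffun v g' | g' in surjections k m].
Proof.
apply/setP => g; rewrite in_setU mem_lift_ffun !inE surjectiveb_cons.
case: (boolP [exists i, g i == v]) => [/existsP[i0 /eqP gi0] | g_miss].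
  have -> : [forall i, g i != v] = false.
    by apply/negbTE/forallPn; exists i0; rewrite gi0 negbK.
  rewrite andFb orbF; apply: eq_forallb => j.
  by case: eqP => [-> | _] //=; apply/esym/existsP; exists i0; apply/eqP.
have -> : [forall i, g i != v].
  by apply/forallP => i; apply: contra g_miss => giv; apply/existsP; exists i.
rewrite [surjectiveb g](_ : _ = false) /=; last first.
  by apply/negbTE; apply: contra g_miss => /forallP; apply.
by apply: eq_forallb => j; rewrite -implyNb.
Qed.

Lemma card_surjectionsS :
  #|surjections k.+1 m.+1| = m.+1 * (#|surjections k m.+1| + #|surjections k m|).
Proof.
rewrite card_ffun_cons (eq_bigr (fun _ => #|surjections k m.+1| + #|surjections k m|)).
  by rewrite sum_nat_const card_ord.
move=> v _; rewrite surjections_cons cardsU (_ : _ :&: _ = set0) ?cards0 ?subn0.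
  by rewrite card_imset //; exact: lift_ffun_inj.
apply/setP => g; rewrite in_setI mem_lift_ffun !inE.
apply/negP => /and3P[/forallP g_surj /forallP g_v _].
by have /existsP[i /eqP gi] := g_surj v; have := g_v i; rewrite gi eqxx.
Qed.

End SurjectionCount.

Lemma card_surjections k m : ord_partitions k m = m`! * stirling2 k m.
Proof.
elim: k m => [|k IHk] [|m]; rewrite /ord_partitions /=.
- rewrite (_ : [set f | _] = setT) ?cardsT ?card_ffun ?card_ord //.
  by apply/setP => f; rewrite !inE; apply/forallP => -[].
- apply/eqP; rewrite muln0 cards_eq0; apply/eqP/setP => f.
  by rewrite !inE; apply/negbTE/forallPn; exists ord0; apply/existsPn => -[].
- apply/eqP; rewrite muln0 -leqn0 (leq_trans (max_card _)) //.
  by rewrite card_ffun !card_ord exp0n.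
- rewrite [LHS]card_surjectionsS -!/(ord_partitions _ _) !IHk factS; lia.
Qed.

Lemma sorting_perm p (f : 'I_p -> nat) :
  exists s : {perm 'I_p}, forall i j : 'I_p, i <= j -> f (s i) <= f (s j).
Proof.
pose le_f := relpre f leq.
have le_f_trans : transitive le_f by move=> b a c /= /leq_trans; apply.
pose srt := sort le_f (enum 'I_p).
have /tuple_permP [s srtE] : perm_eq srt (ord_tuple p).
  by rewrite perm_sort val_ord_tuple.
have size_srt : size srt = p by rewrite size_sort size_enum_ord.
have nth_srt (i : 'I_p) : nth i srt i = s i.
  by rewrite srtE (nth_map i) ?size_enum_ord // nth_ord_enum tnth_ord_tuple.
exists s => i j le_ij; rewrite -nth_srt -(nth_srt j) (set_nth_default i) ?size_srt //.
apply: (sorted_leq_nth le_f_trans) => //; rewrite ?inE ?size_srt //.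
  by move=> a /=.
by apply: sort_sorted => a b; exact: leq_total.
Qed.

Definition ord_mod p (p_gt0 : 0 < p) (j : nat) : 'I_p := Ordinal (ltn_pmod j p_gt0).

Lemma ord_mod_addn_inj p (p_gt0 : 0 < p) y a b :
  a < p -> b < p -> ord_mod p_gt0 (y + a) = ord_mod p_gt0 (y + b) -> a = b.
Proof.
by move=> a_lt b_lt /(congr1 val)/eqP; rewrite /= eqn_modDl !modn_small // => /eqP.
Qed.

Lemma card_ord_lt p c : c <= p -> #|[set j : 'I_p | j < c]| = c.
Proof.
move=> le_cp; rewrite -sum1dep_card -(big_ord_widen _ (fun=> 1) le_cp).
by rewrite sum1_card card_ord.
Qed.

Lemma downset_prefix p (X : {set 'I_p}) :
  (forall i j : 'I_p, i <= j -> j \in X -> i \in X) -> X = [set j : 'I_p | j < #|X|].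
Proof.
move=> X_down; apply/setP => j; rewrite inE; apply/idP/idP => [jX | ].
  rewrite -[j.+1](card_ord_lt (ltn_ord j)); apply: subset_leq_card.
  by apply/subsetP => i; rewrite inE ltnS => /X_down; apply.
apply: contraTT => jX; rewrite -leqNgt -[j in _ <= j](card_ord_lt (ltnW (ltn_ord j))).
apply: subset_leq_card; apply/subsetP => i iX; rewrite inE ltnNge.
by apply: contra jX => /X_down; apply.
Qed.

Definition rank_in p (X : {set 'I_p}) (j : 'I_p) := #|[set i in X | 0 < i <= j]|.

Lemma rank_in_ltE p (X : {set 'I_p}) (i j : 'I_p) :
  i \in X -> (rank_in X j < rank_in X i) = (j < i).
Proof.
move=> iX; case: (ltnP j i) => [lt_ji | le_ij].
  apply: proper_card; apply/properP; split.
    apply/subsetP => i'; rewrite !inE => /and3P[-> -> le_i'j].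
    exact: leq_trans le_i'j (ltnW lt_ji).
  by exists i; rewrite !inE iX (leq_ltn_trans _ lt_ji) //= -ltnNge.
apply/negbTE; rewrite -leqNgt; apply: subset_leq_card; apply/subsetP => i'.
by rewrite !inE => /and3P[-> -> le_i'i]; exact: leq_trans le_i'i le_ij.
Qed.

Lemma rank_in_inj p (X : {set 'I_p}) : {in X &, injective (rank_in X)}.
Proof.
move=> i j iX jX eq_rank; apply: val_inj.
case: (ltngtP i j) => // [lt_ij | lt_ji].
  by move: lt_ij; rewrite -(rank_in_ltE _ jX) eq_rank ltnn.
by move: lt_ji; rewrite -(rank_in_ltE _ iX) eq_rank ltnn.
Qed.

Lemma rank_in_lt p (X : {set 'I_p}) (z j : 'I_p) :
  z \in X -> val z = 0 -> rank_in X j < #|X|.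
Proof.
move=> zX z0; apply: proper_card; apply/properP; split.
  by apply/subsetP => i; rewrite inE => /andP[].
by exists z; rewrite // inE z0 ltnn andbF.
Qed.

Section Tonnetz.

Variables (k : nat) (l : 'I_k -> nat) (n : nat).
Hypotheses (l_gt0 : forall i, 0 < l i) (nE : n = \sum_(i < k) l i) (n_gt0 : 0 < n).

Lemma k_gt0 : 0 < k.
Proof.
rewrite lt0n; apply/eqP => k0; move: n_gt0; rewrite nE big_pred0 // => i.
by have := leq_trans (ltn_ord i) (eq_leq k0).
Qed.

Local Notation toZn := (ord_mod n_gt0).
Local Notation toIk := (ord_mod k_gt0).

(* The partial sums of [tonn_delta], extended periodically, so that moving the base
   point of [Delta(x; s)] to another vertex becomes a shift of the index. *)
Definition walk (s : {perm 'I_k}) (i : nat) := \sum_(0 <= j < i) l (s (toIk j)).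

Lemma prefix_walk (s : {perm 'I_k}) i : i <= k -> \sum_(j < k | j < i) l (s j) = walk s i.
Proof.
move=> le_ik; rewrite /walk big_mkord (big_ord_widen _ (fun j => l (s (toIk j))) le_ik).
by apply: eq_bigr => j _; congr (l (s _)); apply: val_inj; rewrite /= modn_small.
Qed.

Lemma walk_full (s : {perm 'I_k}) : walk s k = n.
Proof.
rewrite -prefix_walk // nE [RHS](reindex_inj (@perm_inj _ s)) /=.
by apply: eq_bigl => j; rewrite ltn_ord.
Qed.

Lemma walk_lt (s : {perm 'I_k}) i j : i < j -> walk s i < walk s j.
Proof.
move=> lt_ij; rewrite /walk (big_cat_nat (leq0n i) (ltnW lt_ij)) /=.
by rewrite -[X in X < _]addn0 ltn_add2l big_ltn // addn_gt0 l_gt0.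
Qed.

Lemma walk_period (s : {perm 'I_k}) i : walk s (k + i) = n + walk s i.
Proof.
rewrite /walk (big_cat_nat (leq0n k) (leq_addr i k)) /= -/(walk s k) walk_full.
rewrite (big_addn 0 _ k) addKn; congr (_ + _); apply: eq_bigr => j _.
by congr (l (s _)); apply: val_inj; rewrite /= modnDr.
Qed.

Lemma walk_mod (s : {perm 'I_k}) i : walk s i = walk s (i %% k) + i %/ k * n.
Proof.
rewrite {1}(divn_eq i k); elim: (i %/ k) => [|q IHq]; first by rewrite add0n addn0.
by rewrite mulSn -addnA walk_period IHq mulSn addnCA.
Qed.

Lemma rotate_inj (i0 : 'I_k) : injective (fun j : 'I_k => toIk (i0 + j)).
Proof. by move=> j j' /(ord_mod_addn_inj (ltn_ord j) (ltn_ord j')) /val_inj. Qed.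

Definition rotate (i0 : 'I_k) : {perm 'I_k} := perm (@rotate_inj i0).

Lemma walk_rotate (s : {perm 'I_k}) (i0 : 'I_k) j :
  walk s i0 + walk (rotate i0 * s) j = walk s (i0 + j).
Proof.
rewrite /walk [RHS](big_cat_nat (leq0n i0) (leq_addr j i0)) /=; congr (_ + _).
rewrite (big_addn 0 _ i0) addKn; apply: eq_bigr => j' _.
by rewrite permM permE; congr (l (s _)); apply: val_inj; rewrite /= modnDmr addnC.
Qed.

Lemma tonn_deltaE (x : 'I_n) (s : {perm 'I_k}) :
  tonn_delta l x s = [set toZn (x + walk s i) | i : 'I_k].
Proof.
apply/setP => y; rewrite inE; apply/existsP/imsetP => [[i /eqP yE] | [i _ ->]].
  by exists i => //; apply: val_inj; rewrite /= yE prefix_walk // ltnW.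
by exists i; rewrite /= prefix_walk // ltnW.
Qed.

Lemma tonn_delta_rebase (x a : 'I_n) (s : {perm 'I_k}) :
  a \in tonn_delta l x s -> exists t, tonn_delta l x s = tonn_delta l a t.
Proof.
rewrite tonn_deltaE => /imsetP[i0 _ ->]; exists (rotate i0 * s)%g.
have pointE (j : 'I_k) :
    toZn (toZn (x + walk s i0) + walk (rotate i0 * s) j) = toZn (x + walk s (rotate i0 j)).
  apply: val_inj; rewrite /= modnDml -addnA walk_rotate walk_mod permE /=.
  by rewrite addnA addnC modnMDl.
rewrite !tonn_deltaE; apply/setP => y; apply/imsetP/imsetP => -[i _ ->].
  by exists ((rotate i0)^-1 i)%g => //; rewrite pointE permKV.
by exists (rotate i0 i); rewrite // pointE.
Qed.

Lemma sum_lt_proper (X : {set 'I_k}) : X \proper setT -> \sum_(i in X) l i < n.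
Proof.
case/properP => _ [i _ iX]; rewrite nE [X in _ < X](bigID (mem X)) /=.
by rewrite -[X in X < _]addn0 ltn_add2l (bigD1 i) // addn_gt0 l_gt0.
Qed.

Section Faces.

Variable m : nat.
Hypothesis gen : generic l.

Definition blocks_before (f : {ffun 'I_k -> 'I_m}) (J : 'I_m) := [set i | f i < J].

(* [f] gives the block of each element of an ordered partition of [k] into [m]
   blocks, as in [ord_partitions]. *)
Definition tonn_face (a : 'I_n) (f : {ffun 'I_k -> 'I_m}) :=
  [set toZn (a + \sum_(i in blocks_before f J) l i) | J : 'I_m].

Lemma blocks_before_proper f J : surjectiveb f -> blocks_before f J \proper setT.
Proof.
move=> /forallP/(_ J)/existsP[i /eqP fi]; rewrite properT.
by apply: contraTneq isT => blocksT; have := in_setT i; rewrite -blocksT inE fi ltnn.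
Qed.

Lemma blocks_before_inj f : surjectiveb f -> injective (blocks_before f).
Proof.
move=> /forallP f_surj J1 J2 eq_blocks; apply: val_inj.
wlog lt12 : J1 J2 eq_blocks / J1 < J2.
  move=> W; case: (ltngtP J1 J2) => [lt12 | gt12 | //]; first exact: W.
  exact/esym/(W _ _ (esym eq_blocks)).
have /existsP[i /eqP fi] := f_surj J1.
have : i \in blocks_before f J2 by rewrite inE fi.
by rewrite -eq_blocks inE fi ltnn.
Qed.

Lemma tonn_face_vertex_inj (a : 'I_n) f J J' : surjectiveb f ->
  toZn (a + \sum_(i in blocks_before f J) l i) =
  toZn (a + \sum_(i in blocks_before f J') l i) -> J = J'.
Proof.
move=> f_surj /ord_mod_addn_inj eq_sum; apply: (blocks_before_inj f_surj); apply: gen.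
by apply: eq_sum; apply: sum_lt_proper; exact: blocks_before_proper.
Qed.

Lemma card_tonn_face (a : 'I_n) f : surjectiveb f -> #|tonn_face a f| = m.
Proof.
by move=> f_surj; rewrite card_imset ?card_ord // => J J'; apply: tonn_face_vertex_inj.
Qed.

Lemma base_in_tonn_face (a : 'I_n) f : 0 < m -> a \in tonn_face a f.
Proof.
move=> m_gt0; apply/imsetP; exists (Ordinal m_gt0) => //; apply: val_inj.
by rewrite /= big_pred0 ?addn0 ?modn_small // => i; rewrite inE.
Qed.

Lemma blocks_before_family (a : 'I_n) f : surjectiveb f ->
  [set blocks_before f J | J : 'I_m] =
  [set X : {set 'I_k} | X \proper setT & toZn (a + \sum_(i in X) l i) \in tonn_face a f].
Proof.
move=> f_surj; apply/setP => X; rewrite inE; apply/imsetP/andP => [[J _ ->] | [X_proper]].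
  by rewrite blocks_before_proper //; split=> //; apply: imset_f.
case/imsetP => J _ /ord_mod_addn_inj eq_sum; exists J => //; apply: gen; apply: eq_sum.
  exact: sum_lt_proper.
by apply: sum_lt_proper; exact: blocks_before_proper.
Qed.

Lemma card_blocks_before_notin f i : surjectiveb f ->
  #|[set X in [set blocks_before f J | J : 'I_m] | i \notin X]| = (f i).+1.
Proof.
move=> f_surj; rewrite -[RHS](card_ord_lt (ltn_ord (f i))).
have -> : [set X in [set blocks_before f J | J : 'I_m] | i \notin X] =
          blocks_before f @: [set J : 'I_m | J < (f i).+1].
  apply/setP => X; rewrite inE; apply/andP/imsetP => [[/imsetP[J _ ->]] | [J]].
    by rewrite inE -leqNgt => le_J; exists J; rewrite ?inE.
  by rewrite inE ltnS => le_J ->; rewrite inE -leqNgt le_J imset_f.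
by rewrite card_imset //; exact: blocks_before_inj.
Qed.

Lemma tonn_face_inj (a : 'I_n) f g : surjectiveb f -> surjectiveb g ->
  tonn_face a f = tonn_face a g -> f = g.
Proof.
move=> f_surj g_surj eq_face; apply/ffunP => i; apply/val_inj/succn_inj.
rewrite -(card_blocks_before_notin i f_surj) -(card_blocks_before_notin i g_surj).
by rewrite !(blocks_before_family a) // eq_face.
Qed.

Lemma tonn_face_simplex (a : 'I_n) f : surjectiveb f -> tonn_simplex l (tonn_face a f).
Proof.
move=> f_surj; have [s s_sorted] := sorting_perm (fun i => val (f i)).
apply/existsP; exists a; apply/existsP; exists s; apply/subsetP => _ /imsetP[J _ ->].
pose X := [set j | f (s j) < J].
have blocks_beforeE : blocks_before f J = s @: X.
  by apply/setP => i; rewrite -[i](permKV s) mem_imset ?inE ?permKV //; exact: perm_inj.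
have X_lt : #|X| < k.
  have := proper_card (blocks_before_proper J f_surj).
  by rewrite cardsT card_ord blocks_beforeE card_imset //; exact: perm_inj.
have X_down (i j : 'I_k) : i <= j -> j \in X -> i \in X.
  by rewrite !inE => /s_sorted; exact: leq_ltn_trans.
rewrite inE; apply/existsP; exists (Ordinal X_lt); apply/eqP; congr ((a + _) %% n).
rewrite blocks_beforeE big_imset /=; last by move=> i j _ _; exact: perm_inj.
by rewrite {1}(downset_prefix X_down); apply: eq_bigl => j; rewrite inE.
Qed.

Lemma tonn_face_of_delta_subset (a : 'I_n) (t : {perm 'I_k}) (A : {set 'I_n}) :
  A \subset tonn_delta l a t -> a \in A -> #|A| = m ->
  exists2 f, surjectiveb f & tonn_face a f = A.
Proof.
rewrite tonn_deltaE => /subsetP A_sub aA card_A.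
pose pt (i : 'I_k) := toZn (a + walk t i).
have walk_lt_n (i : 'I_k) : walk t i < n by rewrite -(walk_full t) walk_lt.
have pt_inj : injective pt.
  move=> i j /(ord_mod_addn_inj (walk_lt_n i) (walk_lt_n j)) eq_walk; apply: val_inj.
  by case: (ltngtP i j) => // /(walk_lt t); rewrite eq_walk ltnn.
pose K := [set i | pt i \in A].
have A_pt : A = pt @: K.
  apply/setP => z; apply/idP/imsetP => [zA | [i + ->]]; last by rewrite inE.
  by have /imsetP[i _ zE] := A_sub z zA; exists i; rewrite // inE /pt -zE.
have card_K : #|K| = m by rewrite -card_A A_pt card_imset.
have K0 : Ordinal k_gt0 \in K.
  rewrite inE (_ : pt _ = a) //.
  by apply: val_inj; rewrite /= /walk big_geq ?addn0 ?modn_small.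
have rank_lt j : rank_in K j < m by rewrite -card_K (rank_in_lt _ K0).
(* Step [t j] joins the block of the last vertex of [A] reached after [j] steps. *)
pose f := [ffun i => Ordinal (rank_lt ((t^-1)%g i))].
have f_t j : val (f (t j)) = rank_in K j by rewrite ffunE permK.
have blocks_before_ft i :
    i \in K -> \sum_(i' in blocks_before f (f (t i))) l i' = walk t i.
  move=> iK; rewrite -prefix_walk ?(ltnW (ltn_ord i)) // (reindex_inj (@perm_inj _ t)).
  by apply: eq_bigl => j; rewrite inE !f_t rank_in_ltE.
have f_surj : surjectiveb f.
  apply: (@surjectiveb_card_image _ _ f (t @: K)).
  rewrite -imset_comp card_in_imset ?card_K ?card_ord // => i j iK jK /(congr1 val).
  by rewrite /= !f_t; exact: rank_in_inj.
exists f => //; apply/esym/eqP; rewrite eqEcard card_tonn_face // card_A leqnn andbT.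
rewrite A_pt; apply/subsetP => _ /imsetP[i iK ->]; apply/imsetP.
by exists (f (t i)); rewrite ?blocks_before_ft.
Qed.

Lemma tonn_face_of_simplex (A : {set 'I_n}) a :
  tonn_simplex l A -> a \in A -> #|A| = m -> exists2 f, surjectiveb f & tonn_face a f = A.
Proof.
case/existsP => x /existsP[s A_sub] aA card_A.
have [t delta_t] := tonn_delta_rebase (subsetP A_sub a aA).
by apply: (tonn_face_of_delta_subset (t := t)); rewrite -?delta_t.
Qed.

Lemma card_pointed_simplices :
  #|[set p : {set 'I_n} * 'I_n | [&& #|p.1| == m, tonn_simplex l p.1 & p.2 \in p.1]]|
  = m * tonn_f n l m.
Proof.
rewrite (card_set_pair (fun (A : {set 'I_n}) (a : 'I_n) =>
  [&& #|A| == m, tonn_simplex l A & a \in A])).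
rewrite (bigID (fun A : {set 'I_n} => (#|A| == m) && tonn_simplex l A)) /=.
rewrite [X in _ + X]big1 => [|A /negbTE not_simplex]; last first.
  by apply/eqP; rewrite cards_eq0; apply/eqP/setP => a; rewrite !inE andbA not_simplex.
rewrite addn0 (eq_bigr (fun=> m)) => [|A /andP[/eqP card_A A_simplex]]; last first.
  by rewrite -[RHS]card_A; apply: eq_card => a; rewrite inE card_A eqxx A_simplex.
by rewrite sum_nat_const mulnC /tonn_f cardsE.
Qed.

Lemma card_tonn_faces : 0 < m -> m * tonn_f n l m = n * ord_partitions k m.
Proof.
move=> m_gt0; rewrite -card_pointed_simplices.
have -> : n * ord_partitions k m =
          #|[set p : 'I_n * {ffun 'I_k -> 'I_m} | surjectiveb p.2]|.
  by rewrite (card_set_pair (fun _ f => surjectiveb f)) sum_nat_const card_ord.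
pose face_pair (p : 'I_n * {ffun 'I_k -> 'I_m}) := (tonn_face p.1 p.2, p.1).
have face_pair_inj : {in [set p | surjectiveb p.2] &, injective face_pair}.
  move=> [a f] [a' g]; rewrite !inE /= => f_surj g_surj [+ eq_a]; rewrite -eq_a => eq_face.
  by congr pair; exact: tonn_face_inj f_surj g_surj eq_face.
rewrite -(card_in_imset face_pair_inj); apply: eq_card => -[A a].
rewrite inE /=; apply/and3P/imsetP => [[/eqP card_A A_simplex aA] | [[a' f] + [-> ->]]].
  have [f f_surj faceE] := tonn_face_of_simplex A_simplex aA card_A.
  by exists (a, f); rewrite ?inE // /face_pair /= faceE.
rewrite inE /= => f_surj; split; first by rewrite card_tonn_face.
  exact: tonn_face_simplex.
exact: base_in_tonn_face.
Qed.

End Faces.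

End Tonnetz.

Theorem proposition2p5 (k : nat) (l : 'I_k -> nat) (n : nat) :
  2 <= k ->
  (forall i, 0 < l i) ->
  n = \sum_(i < k) l i ->
  generic l -> reduced l ->
  forall m, 1 <= m <= k ->
    tonn_f n l m = n * (ord_partitions k m %/ m) /\
    tonn_f n l m = n * (m`! %/ m) * stirling2 k m.
Proof.
move=> k_ge2 l_gt0 nE gen _ [//|m] _.
have n_gt0 : 0 < n.
  have k_gt0 : 0 < k by apply: leq_trans k_ge2.
  by rewrite nE (bigD1 (Ordinal k_gt0)) // addn_gt0 l_gt0.
have count := card_tonn_faces l_gt0 nE n_gt0 gen (ltn0Sn m).
have f_eq : tonn_f n l m.+1 = n * (m`! * stirling2 k m.+1).
  apply/eqP; rewrite -(eqn_pmul2l (ltn0Sn m)) count card_surjections factS.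
  by rewrite -mulnA mulnCA.
by rewrite card_surjections factS -!mulnA !mulKn.
Qed.
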